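(* Let $n\ge 1$ and let $f\in\mathcal{G}_1$ be $n$-ary, $f=2x_1\cdots x_n\left(\sum_{i=1}^n a_ix_i^2+\sum_{i=1}^n b_ix_i+c\right)$, with $a_i\ne 0$ for some $i$. If $f\in\mathcal{G}_0$, then $C(f)=C(2w_n)$. If $f\in\mathcal{G}_1\setminus\mathcal{G}_0$, then $C(f)=C(2q_n)$.
   Context: All operations are on $\mathbb{Z}_8$. $\mathcal{G}_1$ is the set of all operations (of any arity $n\ge1$) given by $2x_1\cdots x_n\left(\sum_{i=1}^n a_ix_i^2+\sum_{i=1}^n b_ix_i+c\right)$ with $a_i,b_i\in\{0,1\}$ and $c\in\{0,1,2,3\}$; $\mathcal{G}_0$ is the subset of those for which $\sum_{i=1}^na_i+\sum_{i=1}^nb_i+c$ is even. For an operation $f$, $C(f)$ denotes the clone generated by $f$ together with binary addition and all unary constant operations. $w_n=x_1\cdots x_n(x_1^2+1)$, $q_n=x_1^3x_2\cdots x_n$. *)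

From HB Require Import structures.
From mathcomp Require Import all_boot all_algebra.
Set Implicit Arguments. Unset Strict Implicit. Unset Printing Implicit Defensive.
Import GRing.Theory.
Local Open Scope ring_scope.

(* The ring Z_8 (8 >= 2, so 'Z_8 is genuinely Z/8Z). *)
Definition Z8 : comNzRingType := 'Z_8.

(* A finitary operation on Z_8: an arity n together with a map Z8^n -> Z8.
   Arguments are indexed by 'I_n (x_1..x_n of the paper are x 0 .. x (n-1)). *)
Definition op := {n : nat & ('I_n -> Z8) -> Z8}.
Definition mkop (n : nat) (f : ('I_n -> Z8) -> Z8) : op := existT _ n f.

(* Operations are identified extensionally. *)
Inductive clone_gen (S : op -> Prop) : op -> Prop :=
| cg_gen g : S g -> clone_gen S g
| cg_proj n (i : 'I_n) : clone_gen S (@mkop n (fun x => x i))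
| cg_comp m k (g : ('I_m -> Z8) -> Z8) (hs : 'I_m -> ('I_k -> Z8) -> Z8) :
    (0 < k)%N ->
    clone_gen S (mkop g) -> (forall j, clone_gen S (mkop (hs j))) ->
    clone_gen S (@mkop k (fun x => g (fun j => hs j x)))
| cg_ext n (g h : ('I_n -> Z8) -> Z8) :
    (forall x, g x = h x) -> clone_gen S (mkop g) -> clone_gen S (mkop h).

Definition add_op : op := @mkop 2 (fun x => x ord0 + x (lift ord0 ord0)).
Definition const_op (c : Z8) : op := @mkop 1 (fun _ => c).

Definition C (f : op) : op -> Prop :=
  clone_gen (fun g => g = f \/ g = add_op \/ exists c, g = const_op c).

Definition G1fun (n : nat) (a b : 'I_n -> bool) (c : 'I_4) (x : 'I_n -> Z8) : Z8 :=
  2 * (\prod_(i < n) x i) *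
  (\sum_(i < n) (a i)%:R * x i ^+ 2 + \sum_(i < n) (b i)%:R * x i + (val c)%:R).

Definition in_G0 (n : nat) (a b : 'I_n -> bool) (c : 'I_4) : bool :=
  ~~ odd (\sum_(i < n) nat_of_bool (a i) + \sum_(i < n) nat_of_bool (b i) + val c)%N.

(* 2 w_n and 2 q_n, of arity n.+1 (variables x_1..x_{n+1} = x 0..x n). *)
Definition two_w (n : nat) : op :=
  @mkop n.+1 (fun x => 2 * ((\prod_(i < n.+1) x i) * (x ord0 ^+ 2 + 1))).
Definition two_q (n : nat) : op :=
  @mkop n.+1 (fun x => 2 * (x ord0 ^+ 3 * \prod_(i < n.+1 | i != ord0) x i)).

(* Over Z_8 one has 2 x y x^2 = 2 x y + 4 [x = 2 mod 4] y, so every member of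
   G_1 splits as  s * 2 x_1...x_n  plus a sum of "corrections"
   T_i = 4 [x_i = 2 mod 4] prod_{j <> i} x_j  (and their shifts in x_i), where s is
   the parity weight sum a_i + sum b_i + c.  If some a_i = 1, suitable linear
   substitutions of f, added up, produce every T_i, and two shifts of T_1 add up
   to 4 x_1...x_n.  Modulo the clone of the T_i, f is therefore s * 2 x_1...x_n,
   2 w_n is 4 x_1...x_n (absorbed) and 2 q_n is 2 x_1...x_n.  For s even this
   makes f and 2 w_n interdefinable; for s odd, s^2 = 1 in Z_8 makes f and
   2 q_n interdefinable. *)
From mathcomp Require Import all_boot all_algebra ring.
Set Implicit Arguments. Unset Strict Implicit. Unset Printing Implicit Defensive.
Import GRing.Theory.
Local Open Scope ring_scope.

Lemma Z8_all (P : Z8 -> bool) : all (fun i => P (inZp i)) (iota 0 8) -> forall x, P x.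
Proof.
move=> /allP hP x; have := hP (nat_of_ord (x : 'Z_8)); rewrite mem_iota /=.
by rewrite (ltn_ord (x : 'Z_8)) => /(_ isT); rewrite valZpK.
Qed.

Definition ind2 (z : Z8) : Z8 := if (nat_of_ord (z : 'Z_8) %% 4 == 2)%N then 1 else 0.
Definition ind23 (z : Z8) : Z8 := ind2 z + ind2 (z + 3).

Lemma Z8_mul8 (y : Z8) : y *+ 8 = 0.
Proof. by apply/eqP; move: y; apply: Z8_all; vm_compute. Qed.

Lemma Z8_sqr_odd k : odd k -> ((k * k)%:R : Z8) = 1.
Proof.
move=> k_odd; rewrite -[(k * k)%:R](Zp_nat_mod (p := 8)) // -modnMm.
have : odd (k %% 8) by rewrite odd_mod.
have : (k %% 8 < 8)%N by rewrite ltn_mod.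
by move: (k %% 8)%N => r; do 8?[case: r => [|r] //]; move=> *; apply/eqP; vm_compute.
Qed.

Lemma mul2_sqr_Z8 (x y : Z8) : 2 * (x * y) * x ^+ 2 = 2 * (x * y) + 4 * ind2 x * y.
Proof. by apply/eqP; move: y; apply: Z8_all; move: x; apply: Z8_all; vm_compute. Qed.

Lemma mul2_self_Z8 (x y : Z8) : 2 * (x * y) * x = 2 * (x * y) + 4 * ind23 x * y.
Proof. by apply/eqP; move: y; apply: Z8_all; move: x; apply: Z8_all; vm_compute. Qed.

Lemma mul4_ind2_shifts (x : Z8) : 4 * x = 4 * (ind2 (x + 1) + ind2 (x + 3)).
Proof. by apply/eqP; move: x; apply: Z8_all; vm_compute. Qed.

Section CloneClosure.

Variable S : op -> Prop.
Hypothesis S_add : S add_op.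
Hypothesis S_const : forall c, S (const_op c).

Lemma clone_gen_ext n (F G : ('I_n -> Z8) -> Z8) :
  clone_gen S (mkop F) -> F =1 G -> clone_gen S (mkop G).
Proof. by move=> hF eFG; exact: cg_ext eFG hF. Qed.

Lemma clone_gen_const n (c : Z8) : clone_gen S (@mkop n.+1 (fun _ => c)).
Proof.
exact: (@cg_comp S 1 n.+1 (fun _ => c) (fun _ x => x ord0) (ltn0Sn n)
  (cg_gen (S_const c)) (fun _ => cg_proj S ord0)).
Qed.

Lemma clone_gen_add n (F G : ('I_n.+1 -> Z8) -> Z8) :
  clone_gen S (mkop F) -> clone_gen S (mkop G) ->
  clone_gen S (mkop (fun x => F x + G x)).
Proof.
move=> hF hG.
have hFG (j : 'I_2) : clone_gen S (mkop (if j == ord0 then F else G)).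
  by case: (j == ord0).
exact: clone_gen_ext (cg_comp (ltn0Sn n) (cg_gen S_add) hFG) (fun=> erefl).
Qed.

Lemma clone_gen_muln n (F : ('I_n.+1 -> Z8) -> Z8) k :
  clone_gen S (mkop F) -> clone_gen S (mkop (fun x => F x *+ k)).
Proof.
move=> hF; elim: k => [|k IHk].
  by apply: clone_gen_ext (clone_gen_const n 0) _ => x; rewrite mulr0n.
by apply: clone_gen_ext (clone_gen_add hF IHk) _ => x; rewrite mulrS.
Qed.

Lemma clone_gen_opp n (F : ('I_n.+1 -> Z8) -> Z8) :
  clone_gen S (mkop F) -> clone_gen S (mkop (fun x => - F x)).
Proof.
move=> hF; apply: clone_gen_ext (clone_gen_muln 7 hF) _ => x.
by apply: (addrI (F x)); rewrite -mulrS subrr; move: (F x); apply: Z8_mul8.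
Qed.

Lemma clone_gen_sum n (I : Type) (r : seq I) (F : I -> ('I_n.+1 -> Z8) -> Z8) :
  (forall i, clone_gen S (mkop (F i))) ->
  clone_gen S (mkop (fun x => \sum_(i <- r) F i x)).
Proof.
move=> hF; elim: r => [|i r IHr].
  by apply: clone_gen_ext (clone_gen_const n 0) _ => x; rewrite big_nil.
by apply: clone_gen_ext (clone_gen_add (hF i) IHr) _ => x; rewrite big_cons.
Qed.

End CloneClosure.

Lemma clone_gen_trans (S1 S2 : op -> Prop) :
  (forall g, S1 g -> clone_gen S2 g) -> forall g, clone_gen S1 g -> clone_gen S2 g.
Proof.
move=> hS12 g; elim=> {g} [g /hS12 //|n i|m k g hs k_gt0 _ IHg _ IHhs|n g h eqgh _ IHg].
- exact: cg_proj.
- exact: cg_comp.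
- exact: cg_ext IHg.
Qed.

Definition two_prod n (x : 'I_n -> Z8) : Z8 := 2 * \prod_(i < n) x i.

Definition mono4 n (i : 'I_n) (g : Z8 -> Z8) (x : 'I_n -> Z8) : Z8 :=
  4 * g (x i) * \prod_(j < n | j != i) x j.

Lemma two_prod_mul_sqr n (x : 'I_n -> Z8) i :
  two_prod x * x i ^+ 2 = two_prod x + mono4 i ind2 x.
Proof.
rewrite /two_prod /mono4 (bigD1 i) //=; set p := \prod_(j < n | j != i) x j.
by rewrite mul2_sqr_Z8; ring.
Qed.

Lemma two_prod_mul n (x : 'I_n -> Z8) i :
  two_prod x * x i = two_prod x + mono4 i ind23 x.
Proof.
rewrite /two_prod /mono4 (bigD1 i) //=; set p := \prod_(j < n | j != i) x j.
by rewrite mul2_self_Z8; ring.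
Qed.

Definition G1_weight n (a b : 'I_n -> bool) (c : 'I_4) : nat :=
  (\sum_(i < n) nat_of_bool (a i) + \sum_(i < n) nat_of_bool (b i) + val c)%N.

Definition mono4_sum n (a b : 'I_n -> bool) (x : 'I_n -> Z8) : Z8 :=
  \sum_(i < n) ((a i)%:R * mono4 i ind2 x + (b i)%:R * mono4 i ind23 x).

Lemma G1fun_decomp n (a b : 'I_n -> bool) c x :
  G1fun a b c x = (G1_weight a b c)%:R * two_prod x + mono4_sum a b x.
Proof.
rewrite /G1fun -/(two_prod x) !mulrDr !mulr_sumr.
under eq_bigr do rewrite mulrCA two_prod_mul_sqr.
under [X in _ + X + _]eq_bigr do rewrite mulrCA two_prod_mul.
rewrite /G1_weight /mono4_sum !natrD !natr_sum !mulrDl !mulr_suml !big_split /=.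
set P := two_prod x.
under eq_bigr do rewrite mulrDr.
under [X in _ + X + _]eq_bigr do rewrite mulrDr.
rewrite !big_split /=; ring.
Qed.

Lemma bigD1_pair (R : Type) (idx : R) (op : Monoid.com_law idx) n (m k : 'I_n)
    (F : 'I_n -> R) :
  m != k ->
  \big[op/idx]_(j < n) F j =
  op (F m) (op (F k) (\big[op/idx]_(j < n | (j != m) && (j != k)) F j)).
Proof. by move=> mk; rewrite (bigD1 m) //= (bigD1 k) //= eq_sym. Qed.

Definition subst2 n (x : 'I_n -> Z8) (m k : 'I_n) (u v : Z8) : 'I_n -> Z8 :=
  fun l => if l == m then u else if l == k then v else x l.

Definition pair_form (am bm ak bk : bool) (R L u v : Z8) : Z8 :=
  2 * (u * v * R) * (am%:R * u ^+ 2 + bm%:R * u + ak%:R * v ^+ 2 + bk%:R * v + L).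

Definition prod_off2 n (x : 'I_n -> Z8) (m k : 'I_n) : Z8 :=
  \prod_(j < n | (j != m) && (j != k)) x j.

Definition sum_off2 n (a b : 'I_n -> bool) (c : 'I_4) (x : 'I_n -> Z8) (m k : 'I_n) : Z8 :=
  \sum_(j < n | (j != m) && (j != k)) ((a j)%:R * x j ^+ 2 + (b j)%:R * x j)
  + (val c)%:R.

Lemma G1fun_subst2 n a b c (x : 'I_n -> Z8) m k u v : m != k ->
  G1fun a b c (subst2 x m k u v) =
  pair_form (a m) (b m) (a k) (b k) (prod_off2 x m k) (sum_off2 a b c x m k) u v.
Proof.
move=> mk; rewrite /G1fun !(bigD1_pair _ _ mk).
have sub_m : subst2 x m k u v m = u by rewrite /subst2 eqxx.
have sub_k : subst2 x m k u v k = v by rewrite /subst2 eq_sym (negbTE mk) eqxx.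
have sub_off j : (j != m) && (j != k) -> subst2 x m k u v j = x j.
  by case/andP=> /negbTE jm /negbTE jk; rewrite /subst2 jm jk.
rewrite sub_m sub_k (eq_bigr _ sub_off).
have -> : \sum_(j < n | (j != m) && (j != k)) (a j)%:R * subst2 x m k u v j ^+ 2
        = \sum_(j < n | (j != m) && (j != k)) (a j)%:R * x j ^+ 2.
  by apply: eq_bigr => j /sub_off ->.
have -> : \sum_(j < n | (j != m) && (j != k)) (b j)%:R * subst2 x m k u v j
        = \sum_(j < n | (j != m) && (j != k)) (b j)%:R * x j.
  by apply: eq_bigr => j /sub_off ->.
rewrite /pair_form /prod_off2 /sum_off2 big_split /=; ring.
Qed.

Definition affine (p : nat * nat * nat) (s t : Z8) : Z8 := s *+ p.1.1 + t *+ p.1.2 + p.2%:R.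

(* A term (N, p, q) stands for N copies of f with its two distinguished
   arguments s, t replaced by affine p s t and affine q s t. *)
Definition combo := (nat * (nat * nat * nat) * (nat * nat * nat))%type.

Definition combo_form (am bm ak bk : bool) (R L s t : Z8) (cs : seq combo) : Z8 :=
  \sum_(e <- cs) pair_form am bm ak bk R L (affine e.1.2 s t) (affine e.2 s t) *+ e.1.1.

(* Found by a computer search; [combo_m_form] and [combo_k_form] check them
   exhaustively. *)
Definition combo_m : seq combo :=
 [:: (1,(1,0,1),(0,1,0)); (7,(0,0,1),(0,1,0)); (5,(0,1,1),(1,0,0)); (3,(0,0,1),(1,0,0));
     (7,(1,0,0),(0,1,0)); (1,(1,1,0),(1,0,0)); (7,(1,0,0),(1,0,0)); (1,(0,2,0),(1,0,0))]%N.
Definition combo_k : seq combo :=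
 [:: (1,(1,0,1),(0,1,0)); (7,(0,0,1),(0,1,0)); (5,(0,1,1),(1,0,0)); (3,(0,0,1),(1,0,0));
     (1,(1,1,0),(0,1,0)); (7,(0,1,0),(0,1,0)); (1,(0,2,0),(1,0,0)); (7,(0,1,0),(1,0,0))]%N.

Lemma combo_form_scale am bm ak bk R L s t cs :
  combo_form am bm ak bk R L s t cs = R * combo_form am bm ak bk 1 L s t cs.
Proof.
rewrite /combo_form mulr_sumr; apply: eq_bigr => e _.
by rewrite mulrnAr /pair_form; congr (_ *+ _); ring.
Qed.

Lemma combo_m_form bm ak bk R L s t :
  combo_form true bm ak bk R L s t combo_m = 4 * ind2 s * (t * R).
Proof.
rewrite combo_form_scale.
suff -> : combo_form true bm ak bk 1 L s t combo_m = 4 * ind2 s * t by ring.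
rewrite /combo_form !big_cons big_nil.
apply/eqP; move: L; apply: Z8_all; move: t; apply: Z8_all; move: s; apply: Z8_all.
by case: bm; case: ak; case: bk; vm_compute.
Qed.

Lemma combo_k_form bm ak bk R L s t :
  combo_form true bm ak bk R L s t combo_k = 4 * ind2 t * (s * R).
Proof.
rewrite combo_form_scale.
suff -> : combo_form true bm ak bk 1 L s t combo_k = 4 * ind2 t * s by ring.
rewrite /combo_form !big_cons big_nil.
apply/eqP; move: L; apply: Z8_all; move: t; apply: Z8_all; move: s; apply: Z8_all.
by case: bm; case: ak; case: bk; vm_compute.
Qed.

Definition combo_term n a b c (m k : 'I_n) (e : combo) (x : 'I_n -> Z8) : Z8 :=
  G1fun a b c (subst2 x m k (affine e.1.2 (x m) (x k)) (affine e.2 (x m) (x k)))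
  *+ e.1.1.

Lemma combo_term_sum n a b c (x : 'I_n -> Z8) m k cs : m != k ->
  \sum_(e <- cs) combo_term a b c m k e x =
  combo_form (a m) (b m) (a k) (b k) (prod_off2 x m k) (sum_off2 a b c x m k)
    (x m) (x k) cs.
Proof. by move=> mk; apply: eq_bigr => e _; rewrite /combo_term G1fun_subst2. Qed.

Section Generation.

Variable S : op -> Prop.
Hypothesis S_add : S add_op.
Hypothesis S_const : forall c, S (const_op c).

Lemma clone_gen_affine n (m k : 'I_n.+1) p :
  clone_gen S (mkop (fun x => affine p (x m) (x k))).
Proof.
have proj_in l k' : clone_gen S (@mkop n.+1 (fun x => x l *+ k')).
  exact: clone_gen_muln (cg_proj S l).
apply: clone_gen_ext (clone_gen_add S_add
  (clone_gen_add S_add (proj_in m p.1.1) (proj_in k p.1.2))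
  (clone_gen_const S_const n p.2%:R)) _ => x.
by [].
Qed.

Lemma clone_gen_combo n a b c (m k : 'I_n.+1) cs :
  clone_gen S (mkop (G1fun a b c)) ->
  clone_gen S (mkop (fun x => \sum_(e <- cs) combo_term a b c m k e x)).
Proof.
move=> f_in; apply: (clone_gen_sum S_add S_const cs (F := combo_term a b c m k)) => e.
apply: (clone_gen_muln S_add S_const (F := fun x => G1fun a b c
  (subst2 x m k (affine e.1.2 (x m) (x k)) (affine e.2 (x m) (x k))))).
apply: cg_comp (ltn0Sn n) f_in _ => l; rewrite /subst2.
case: (l == m); first exact: clone_gen_affine.
case: (l == k); [exact: clone_gen_affine | exact: cg_proj].
Qed.

Lemma clone_gen_mono4_ind2_arity1 (a b : 'I_1 -> bool) c :
  a ord0 -> clone_gen S (mkop (G1fun a b c)) -> clone_gen S (mkop (mono4 (ord0 : 'I_1) ind2)).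
Proof.
(* With s the weight, 4 [x = 2 mod 4] = f (x + b) - 2 s (x + b) over Z_8. *)
move=> a0 f_in.
have g_in := clone_gen_add S_add f_in
  (clone_gen_muln S_add S_const (14 * G1_weight a b c) (cg_proj S ord0)).
have shift_in (j : 'I_1) := clone_gen_add S_add (cg_proj S ord0)
  (clone_gen_const S_const 0 (nat_of_bool (b ord0))%:R).
apply: clone_gen_ext (cg_comp (ltn0Sn 0) g_in shift_in) _ => x /=.
rewrite /G1fun /mono4 /G1_weight !big_ord1 big_mkcond big_ord1 eqxx a0 /=.
move: (x ord0) (b ord0) => x0 b0; clear f_in g_in shift_in.
by case: c => [[|[|[|[|?]]]] ?] //; case: b0; apply/eqP; move: x0; apply: Z8_all; vm_compute.
Qed.

Lemma mono4_ind2_pairl n (x : 'I_n -> Z8) m k : m != k ->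
  mono4 m ind2 x = 4 * ind2 (x m) * (x k * prod_off2 x m k).
Proof. by move=> mk; rewrite /mono4 (bigD1 k) 1?eq_sym. Qed.

Lemma mono4_ind2_pairr n (x : 'I_n -> Z8) m k : m != k ->
  mono4 k ind2 x = 4 * ind2 (x k) * (x m * prod_off2 x m k).
Proof.
move=> mk; rewrite /mono4 (bigD1 m) //= /prod_off2.
by under eq_bigl do rewrite andbC.
Qed.

Lemma clone_gen_mono4_ind2 n (a b : 'I_n.+1 -> bool) c :
  (exists m, a m) -> clone_gen S (mkop (G1fun a b c)) ->
  forall i : 'I_n.+1, clone_gen S (mkop (mono4 i ind2)).
Proof.
case: n a b c => [|n] a b c [m am] f_in i.
  by rewrite ord1 in am; rewrite (ord1 i); exact: clone_gen_mono4_ind2_arity1 am f_in.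
have combo_in (m' k' : 'I_n.+2) cs := clone_gen_combo m' k' cs f_in.
have [-> | im] := eqVneq i m.
  have [k mk] : exists k : 'I_n.+2, m != k.
    by case: (eqVneq m ord0) => [->|]; [exists ord_max | exists ord0].
  apply: clone_gen_ext (combo_in m k combo_m) _ => x.
  by rewrite combo_term_sum // (mono4_ind2_pairl _ mk) am combo_m_form.
have mi : m != i by rewrite eq_sym.
apply: clone_gen_ext (combo_in m i combo_k) _ => x.
by rewrite combo_term_sum // (mono4_ind2_pairr _ mi) am combo_k_form.
Qed.

End Generation.

Section MonomialClone.

Variable S : op -> Prop.
Hypothesis S_add : S add_op.
Hypothesis S_const : forall c, S (const_op c).
Variable n : nat.
Hypothesis mono4_in : forall i : 'I_n.+1, clone_gen S (mkop (mono4 i ind2)).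

Lemma clone_gen_mono4_shift (i : 'I_n.+1) s :
  clone_gen S (mkop (mono4 i (fun z => ind2 (z + s)))).
Proof.
have shift_in (l : 'I_n.+1) :
    clone_gen S (mkop (fun x : 'I_n.+1 -> Z8 => if l == i then x l + s else x l)).
  case: (l == i); last exact: cg_proj.
  exact: clone_gen_ext (clone_gen_add S_add (cg_proj S l) (clone_gen_const S_const n s)) _.
apply: clone_gen_ext (cg_comp (ltn0Sn n) (mono4_in i) shift_in) _ => x /=.
by rewrite /mono4 eqxx; congr (_ * _); apply: eq_bigr => j /negbTE ->.
Qed.

Lemma clone_gen_four_prod : clone_gen S (mkop (fun x : 'I_n.+1 -> Z8 => 2 * two_prod x)).
Proof.
apply: clone_gen_ext (clone_gen_add S_add
  (clone_gen_mono4_shift ord0 1) (clone_gen_mono4_shift ord0 3)) _ => x.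
rewrite /mono4 /two_prod [in RHS](bigD1 ord0) //=; set p := \prod_(j < n.+1 | j != ord0) x j.
have -> : 2 * (2 * (x ord0 * p)) = 4 * x ord0 * p by ring.
by rewrite (mul4_ind2_shifts (x ord0)); ring.
Qed.

Lemma clone_gen_mono4_sum (a b : 'I_n.+1 -> bool) : clone_gen S (mkop (mono4_sum a b)).
Proof.
have ind23_in (i : 'I_n.+1) : clone_gen S (mkop (mono4 i ind23)).
  apply: clone_gen_ext (clone_gen_add S_add (mono4_in i) (clone_gen_mono4_shift i 3)) _.
  by move=> x; rewrite /mono4 /ind23; ring.
apply: (clone_gen_sum S_add S_const (index_enum 'I_n.+1)
  (F := fun i x => (a i)%:R * mono4 i ind2 x + (b i)%:R * mono4 i ind23 x)) => i.
apply: clone_gen_ext (clone_gen_add S_add (clone_gen_muln S_add S_const (a i) (mono4_in i))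
  (clone_gen_muln S_add S_const (b i) (ind23_in i))) _ => x.
by rewrite !mulr_natl.
Qed.

End MonomialClone.

Definition first_var n : 'I_n.+1 -> bool := fun i => i == ord0.
Definition no_var n : 'I_n -> bool := fun=> false.

Lemma G1fun_first_sqr n c (x : 'I_n.+1 -> Z8) :
  G1fun (@first_var n) (@no_var n.+1) c x = two_prod x * (x ord0 ^+ 2 + (val c)%:R).
Proof.
rewrite /G1fun -/(two_prod x) (bigD1 ord0) //= big1 => [|i /negbTE i0]; last first.
  by rewrite /first_var i0 mul0r.
by rewrite big1 => [|i _]; [rewrite mul1r !addr0 | rewrite mul0r].
Qed.

Definition w_fun n (x : 'I_n.+1 -> Z8) : Z8 :=
  2 * ((\prod_(i < n.+1) x i) * (x ord0 ^+ 2 + 1)).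
Definition q_fun n (x : 'I_n.+1 -> Z8) : Z8 :=
  2 * (x ord0 ^+ 3 * \prod_(i < n.+1 | i != ord0) x i).

Lemma w_fun_G1 n (x : 'I_n.+1 -> Z8) :
  w_fun x = G1fun (@first_var n) (@no_var n.+1) (Ordinal (isT : 1 < 4)%N) x.
Proof. by rewrite G1fun_first_sqr /w_fun /two_prod mulrA. Qed.

Lemma q_fun_G1 n (x : 'I_n.+1 -> Z8) :
  q_fun x = G1fun (@first_var n) (@no_var n.+1) (Ordinal (isT : 0 < 4)%N) x.
Proof.
by rewrite G1fun_first_sqr /q_fun /two_prod [\prod_(i < n.+1) x i](bigD1 ord0) //=; ring.
Qed.

Lemma w_fun_decomp n (x : 'I_n.+1 -> Z8) : w_fun x = 2 * two_prod x + mono4 ord0 ind2 x.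
Proof. by rewrite w_fun_G1 G1fun_first_sqr mulrDr mulr1 two_prod_mul_sqr; ring. Qed.

Lemma q_fun_decomp n (x : 'I_n.+1 -> Z8) : q_fun x = two_prod x + mono4 ord0 ind2 x.
Proof. by rewrite q_fun_G1 G1fun_first_sqr addr0 two_prod_mul_sqr. Qed.

Definition gens (h : op) : op -> Prop :=
  fun g => g = h \/ g = add_op \/ exists c, g = const_op c.

Lemma gens_self h : clone_gen (gens h) h.
Proof. exact: cg_gen (or_introl erefl). Qed.

Lemma gens_add {h : op} : gens h add_op.
Proof. by right; left. Qed.

Lemma gens_const {h : op} c : gens h (const_op c).
Proof. by right; right; exists c. Qed.

Lemma C_eq_of_gen (h1 h2 : op) :
  clone_gen (gens h2) h1 -> clone_gen (gens h1) h2 -> forall g, C h1 g <-> C h2 g.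
Proof.
move=> h1_in h2_in g; split; apply: clone_gen_trans => k [->|[->|[c ->]]] //;
  exact/cg_gen/gens_add || exact/cg_gen/gens_const.
Qed.

Lemma clone_gen_mono4_w n (i : 'I_n.+1) : clone_gen (gens (two_w n)) (mkop (mono4 i ind2)).
Proof.
have w_in := clone_gen_ext (gens_self (two_w n)) (@w_fun_G1 n).
exact: (clone_gen_mono4_ind2 (a := @first_var n) gens_add gens_const
  (ex_intro _ ord0 (eqxx _)) w_in i).
Qed.

Lemma clone_gen_mono4_q n (i : 'I_n.+1) : clone_gen (gens (two_q n)) (mkop (mono4 i ind2)).
Proof.
have q_in := clone_gen_ext (gens_self (two_q n)) (@q_fun_G1 n).
exact: (clone_gen_mono4_ind2 (a := @first_var n) gens_add gens_const
  (ex_intro _ ord0 (eqxx _)) q_in i).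
Qed.

Lemma C_G1_even n (a b : 'I_n.+1 -> bool) c :
  (exists i, a i) -> in_G0 a b c ->
  forall g, C (mkop (G1fun a b c)) g <-> C (two_w n) g.
Proof.
move=> a_ex even; set f := mkop (G1fun a b c).
have mono_f := clone_gen_mono4_ind2 gens_add gens_const a_ex (gens_self f).
have weight_even : G1_weight a b c = ((G1_weight a b c)./2 * 2)%N.
  by rewrite -[LHS]odd_double_half (negbTE even) muln2.
apply: C_eq_of_gen.
- apply: clone_gen_ext (clone_gen_add gens_add
    (clone_gen_muln gens_add gens_const (G1_weight a b c)./2
       (clone_gen_four_prod gens_add gens_const (@clone_gen_mono4_w n)))
    (clone_gen_mono4_sum gens_add gens_const (@clone_gen_mono4_w n) a b)) _ => x.
  by rewrite G1fun_decomp [in RHS]weight_even natrM -mulr_natl; ring.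
- apply: clone_gen_ext (clone_gen_add gens_add
    (clone_gen_four_prod gens_add gens_const mono_f) (mono_f ord0)) _ => x.
  by rewrite -[RHS]/(w_fun x) w_fun_decomp.
Qed.

Lemma C_G1_odd n (a b : 'I_n.+1 -> bool) c :
  (exists i, a i) -> ~~ in_G0 a b c ->
  forall g, C (mkop (G1fun a b c)) g <-> C (two_q n) g.
Proof.
move=> a_ex odd_weight; rewrite negbK in odd_weight.
set f := mkop (G1fun a b c); set s := G1_weight a b c.
have mono_f := clone_gen_mono4_ind2 gens_add gens_const a_ex (gens_self f).
apply: C_eq_of_gen.
- have q_in : clone_gen (gens (two_q n)) (mkop (@q_fun n)) := gens_self (two_q n).
  apply: clone_gen_ext (clone_gen_add gens_add (clone_gen_add gens_add
      (clone_gen_muln gens_add gens_const s q_in)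
      (clone_gen_muln gens_add gens_const s
         (clone_gen_opp gens_add gens_const (clone_gen_mono4_q ord0))))
    (clone_gen_mono4_sum gens_add gens_const (@clone_gen_mono4_q n) a b)) _ => x.
  by rewrite q_fun_decomp G1fun_decomp -mulr_natl; ring.
- apply: clone_gen_ext (clone_gen_add gens_add (clone_gen_add gens_add
      (clone_gen_muln gens_add gens_const s (gens_self f))
      (clone_gen_muln gens_add gens_const s
         (clone_gen_opp gens_add gens_const
            (clone_gen_mono4_sum gens_add gens_const mono_f a b))))
    (mono_f ord0)) _ => x.
  rewrite -[RHS]/(q_fun x) q_fun_decomp G1fun_decomp -/s.
  transitivity ((s%:R * s%:R : Z8) * two_prod x + mono4 ord0 ind2 x); first by ring.
  by rewrite -natrM Z8_sqr_odd // mul1r.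
Qed.

Theorem theorem4p1 (n : nat) (a b : 'I_n.+1 -> bool) (c : 'I_4) :
  (exists i, a i) ->
  (in_G0 a b c ->
     forall g, C (mkop (G1fun a b c)) g <-> C (two_w n) g) /\
  (~~ in_G0 a b c ->
     forall g, C (mkop (G1fun a b c)) g <-> C (two_q n) g).
Proof. by move=> a_ex; split; [exact: C_G1_even | exact: C_G1_odd]. Qed.
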